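(* Let $p$ be an odd prime and let $H\le\mathrm{S}_n$, $n=pk$, have orbits $\Omega_1,\dots,\Omega_k$ each of size $p$ such that each $D_i:=H|_{\Omega_i}$ is permutation isomorphic to the dihedral group $\mathrm{D}_{2p}$ of order $2p$ in its natural action of degree $p$. Let $D=D_1\times\dots\times D_k\le\mathrm{S}_n$, let $G_i$ be the Sylow $p$-subgroup of $D_i$, $G=G_1\times\dots\times G_k\le\mathrm{S}_n$, and for $q\in\{2,p\}$ let $H_q$ be a Sylow $q$-subgroup of $H$. Then: (1) $H=H_p\rtimes H_2=(H\cap G)\rtimes H_2$, and so $N_{\mathrm{S}_n}(H)\le N_{\mathrm{S}_n}(H_p)$; (2) $H_p$ is a subdirect product of $G$ (each projection $H_p\to G_i$ is surjective), and so $H_p$ has orbits $\Omega_1,\dots,\Omega_k$ with each $H_p|_{\Omega_i}$ cyclic of order $p$; (3) for every $i$ there exists $\alpha_i\in\Omega_i$ such that $H_2|_{\Omega_i}=(D_i)_{\alpha_i}$.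
   Context: Subgroups of $\mathrm{Sym}(\Omega_i)$ are regarded as subgroups of $\mathrm{S}_n$ supported on $\Omega_i$. $(D_i)_{\alpha_i}$ is the stabiliser of $\alpha_i$ in $D_i$. *)

From mathcomp Require Import all_boot all_fingroup all_solvable.
Set Implicit Arguments. Unset Strict Implicit. Unset Printing Implicit Defensive.

(* The dihedral group D_{2p} in its natural action of degree p, realised on
   'I_p = {0,...,p-1} (the vertices of a regular p-gon): the maps
   x |-> b + x (rotations) and x |-> b - x (reflections), mod p. *)
Definition dihedral_nat (p : nat) : {set {perm 'I_p}} :=
  [set s : {perm 'I_p} |
     [exists b : 'I_p, [forall x : 'I_p, val (s x) == (b + x) %% p]]
  || [exists b : 'I_p, [forall x : 'I_p, val (s x) == (b + (p - x)) %% p]]].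

Definition perm_iso_dihedral (p n : nat) (A : {set 'I_n})
    (K : {set {perm 'I_n}}) : Prop :=
  exists phi : 'I_p -> 'I_n,
    [/\ injective phi, [set phi x | x : 'I_p] = A &
        forall g : {perm 'I_n}, g \in K <->
          (perm_on A g /\
           exists2 s, s \in dihedral_nat p & forall x, g (phi x) = phi (s x))].

Notation restrG A H := (restr_perm A @* H)%g.

From mathcomp Require Import all_boot all_fingroup all_solvable zmodp zify.
Set Implicit Arguments. Unset Strict Implicit. Unset Printing Implicit Defensive.
Local Open Scope group_scope.

(* Each D_i = H|Omega_i is dihedral of order 2p, so its Sylow p-subgroup G_i is
   normal of index 2 and its point stabilisers have order 2.  The elements of H
   all of whose restrictions lie in the G_i form H :&: G: a p-group containing
   every p-element and every square of H.  Hence it is the unique (so normal)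
   Sylow p-subgroup of H and has 2-power index, giving H = H_p ><| H_2.  The
   restriction of H_p to Omega_i is a Sylow p-subgroup of D_i, i.e. G_i, and it
   is transitive because its point stabilisers have order dividing both p and 2.
   Finally H_2|Omega_i is a 2-group on an odd number of points, so it fixes some
   alpha_i; being of order 2 it is the whole stabiliser (D_i)_alpha_i. *)

Section TransferPerm.
Variables (S T : finType) (phi : S -> T).
Hypothesis phi_inj : injective phi.

Definition transfer_fun (s : {perm S}) (y : T) : T :=
  if [pick x | phi x == y] is Some x then phi (s x) else y.

Lemma transfer_fun_phi s x : transfer_fun s (phi x) = phi (s x).
Proof. by rewrite /transfer_fun; case: pickP => [z /eqP/phi_inj -> | /(_ x)/eqP]. Qed.

Lemma transfer_fun_out s y : y \notin [set phi x | x : S] -> transfer_fun s y = y.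
Proof.
move=> yNphi; rewrite /transfer_fun; case: pickP => // x /eqP phix_y.
by rewrite -phix_y imset_f in yNphi.
Qed.

Lemma transfer_funK s : cancel (transfer_fun s) (transfer_fun s^-1).
Proof.
move=> y; have [/imsetP[x _ ->] | yNphi] := boolP (y \in [set phi x | x : S]).
  by rewrite !transfer_fun_phi permK.
by rewrite !transfer_fun_out.
Qed.

Definition transfer_perm s : {perm T} := perm (can_inj (transfer_funK s)).

Lemma transfer_permE s x : transfer_perm s (phi x) = phi (s x).
Proof. by rewrite permE transfer_fun_phi. Qed.

Lemma transfer_perm_on s : perm_on [set phi x | x : S] (transfer_perm s).
Proof.
apply/subsetP => y; rewrite inE; apply: contraR => yNphi.
by rewrite permE transfer_fun_out.
Qed.

Lemma transfer_perm_inj : injective transfer_perm.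
Proof.
by move=> s1 s2 eq_s; apply/permP => x; apply: phi_inj; rewrite -!transfer_permE eq_s.
Qed.

Lemma perm_on_transferE g (s : {perm S}) :
  perm_on [set phi x | x : S] g -> (forall x, g (phi x) = phi (s x)) ->
  g = transfer_perm s.
Proof.
move=> g_on g_phi; apply/permP => y.
have [/imsetP[x _ ->] | yNphi] := boolP (y \in [set phi x | x : S]).
  by rewrite g_phi transfer_permE.
by rewrite (out_perm g_on) // (out_perm (transfer_perm_on s)).
Qed.

Lemma transfer_perm1 : transfer_perm 1 = 1.
Proof. by apply/esym/perm_on_transferE => [|x]; rewrite ?perm_on1 ?perm1. Qed.

End TransferPerm.

Lemma Zp_oppK p : involutive (@Zp_opp p).
Proof.
move=> x; apply: val_inj => /=; have := ltn_ord x.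
case: (posnP x) => [-> | x_gt0] x_lt_p; first by rewrite subn0 modnn subn0 modnn.
rewrite (modn_small (_ : p - x < p)); last lia.
by rewrite subKn ?modn_small // ltnW.
Qed.

Definition Zp_opp_perm p : {perm 'I_p} := perm (can_inj (@Zp_oppK p)).

Lemma Zp_opp_permE p x : Zp_opp_perm p x = Zp_opp x.
Proof. by rewrite permE. Qed.

Lemma Zp_opp_perm_dihedral p : Zp_opp_perm p.+1 \in dihedral_nat p.+1.
Proof.
rewrite inE; apply/orP; right; apply/existsP; exists ord0; apply/forallP => x.
by rewrite Zp_opp_permE.
Qed.

Lemma Zp_opp_perm_neq1 p : 1 < p -> Zp_opp_perm p.+1 != 1.
Proof.
move=> p_gt1; apply/eqP => /permP/(_ (inZp 1)); rewrite Zp_opp_permE perm1.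
move/(congr1 val) => /=; rewrite !modn_small; lia.
Qed.

Lemma dihedral_nat_fix0 p (s : {perm 'I_p.+1}) :
  s \in dihedral_nat p.+1 -> s ord0 = ord0 -> s = 1 \/ s = Zp_opp_perm p.+1.
Proof.
rewrite inE => /orP[] /existsP[b /forallP s_b] s0; move: (s_b ord0); rewrite s0 /=.
- rewrite addn0 modn_small // => /eqP b0.
  left; apply/permP => x; apply: val_inj.
  by rewrite perm1 (eqP (s_b x)) -b0 add0n modn_small.
- rewrite subn0 modnDr modn_small // => /eqP b0.
  right; apply/permP => x; apply: val_inj.
  by rewrite Zp_opp_permE (eqP (s_b x)) -b0.
Qed.

Lemma card_perm_iso_dihedral p n (A : {set 'I_n}) (K : {group {perm 'I_n}}) :
  2 < p -> perm_iso_dihedral p A K -> (forall x, x \in A -> orbit 'P K x = A) ->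
  #|K| = (2 * p)%N.
Proof.
case: p => // p p_gt2 [phi [phi_inj imA K_iso]] A_orbit.
pose a := phi ord0; pose t := transfer_perm phi_inj (Zp_opp_perm p.+1).
have aA : a \in A by rewrite -imA imset_f.
have t_on : perm_on A t by rewrite -imA transfer_perm_on.
have tK : t \in K.
  apply/K_iso; split=> //; exists (Zp_opp_perm p.+1); first exact: Zp_opp_perm_dihedral.
  by move=> x; rewrite transfer_permE.
have ta : t a = a.
  by rewrite transfer_permE Zp_opp_permE; congr phi; apply: val_inj; rewrite /= subn0 modnn.
have t_neq1 : t != 1.
  rewrite -(transfer_perm1 phi_inj) (inj_eq (transfer_perm_inj (phi_inj:=phi_inj))).
  exact: Zp_opp_perm_neq1.
have stab_a : 'C_K[a | 'P] = [set 1; t].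
  apply/eqP; rewrite eqEsubset; apply/andP; split; last first.
    apply/subsetP => g /set2P[]->; apply/setIP; split; rewrite ?group1 //;
      by apply/astab1P; rewrite /= apermE ?perm1.
  apply/subsetP => g /setIP[/K_iso[g_on [s s_dih g_phi]] /astab1P]; rewrite /= apermE => ga.
  have s0 : s ord0 = ord0 by apply: (phi_inj); rewrite -g_phi.
  rewrite (perm_on_transferE phi_inj _ g_phi) ?imA // !inE.
  by case: (dihedral_nat_fix0 s_dih s0) => ->; rewrite ?transfer_perm1 eqxx ?orbT.
rewrite -(card_orbit_stab 'P K a) stab_a cards2 eq_sym t_neq1 A_orbit //.
by rewrite -imA card_imset // card_ord mulnC.
Qed.

Section RestrPerm.
Variable T : finType.
Implicit Types (A B : {set T}) (g : {perm T}).

Lemma perm_on_astabs A g : perm_on A g -> g \in 'N(A | 'P).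
Proof. by move=> g_on; apply/astabsP => x; rewrite /= apermE (perm_closed _ g_on). Qed.

Lemma perm_on_astab A B g : perm_on B g -> [disjoint A & B] -> g \in 'C(A | 'P).
Proof.
move=> g_on dAB; apply/astabP => x xA; rewrite /= apermE (out_perm g_on) //.
by rewrite (disjointFr dAB xA).
Qed.

Lemma restr_perm_on_id A g : perm_on A g -> restr_perm A g = g.
Proof.
move=> g_on; apply/permP => x; have [xA | xNA] := boolP (x \in A).
  by rewrite restr_permE // perm_on_astabs.
by rewrite !(out_perm _ xNA) // restr_perm_on.
Qed.

Lemma orbit_restr_perm A (K : {group {perm T}}) x :
  K \subset 'N(A | 'P) -> x \in A -> orbit 'P (restr_perm A @* K) x = orbit 'P K x.
Proof.
move=> nAK xA; rewrite /orbit morphimEsub // -imset_comp.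
by apply: eq_in_imset => g gK /=; rewrite !apermE restr_permE // (subsetP nAK).
Qed.

Lemma prod_restr_permE (I : eqType) (Om : I -> {set T}) (s : seq I) g x :
  uniq s -> (forall i j y, y \in Om i -> y \in Om j -> i = j) ->
  (forall i, g \in 'N(Om i | 'P)) ->
  (\prod_(i <- s) restr_perm (Om i) g) x = if has (fun i => x \in Om i) s then g x else x.
Proof.
move=> + Om_disj nOm_g; elim: s x => [|i s IHs] x /=; first by rewrite big_nil perm1.
case/andP => iNs s_uniq; rewrite big_cons permM.
have [xi | xNi] /= := boolP (x \in Om i); last first.
  by rewrite (out_perm (restr_perm_on _ _)) // IHs.
have gxi : g x \in Om i by have /astabsP/(_ x) := nOm_g i; rewrite /= apermE xi.
rewrite restr_permE // IHs //; case: hasP => // -[j js gxj].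
by rewrite (Om_disj _ _ _ gxi gxj) js in iNs.
Qed.

Lemma prod_restr_perm (I : finType) (Om : I -> {set T}) g :
  (forall i j x, x \in Om i -> x \in Om j -> i = j) -> (forall x, exists i, x \in Om i) ->
  (forall i, g \in 'N(Om i | 'P)) -> \prod_i restr_perm (Om i) g = g.
Proof.
move=> Om_disj Om_cover nOm_g; apply/permP => x.
rewrite prod_restr_permE ?index_enum_uniq //.
case: hasP => // -[]; have [i xi] := Om_cover x.
by exists i; rewrite ?mem_index_enum.
Qed.

End RestrPerm.

Lemma expg2_index2 (gT : finGroupType) (G N : {group gT}) x :
  N \subset G -> #|G : N| = 2 -> x \in G -> x ^+ 2 \in N.
Proof.
move=> sNG iGN xG; have nNG := normal_norm (index2_normal sNG iGN).
have nNx := subsetP nNG x xG.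
apply: coset_idr; first by rewrite groupX.
by rewrite morphX // -iGN -card_quotient // expg_cardG // mem_quotient.
Qed.

Lemma pnat_index_expg (gT : finGroupType) (G N : {group gT}) q :
  prime q -> N <| G -> {in G, forall x, x ^+ q \in N} -> q.-nat #|G : N|.
Proof.
move=> q_pr nNG expqN; rewrite -card_quotient ?normal_norm //.
rewrite -[_.-nat _]/(q.-group (G / N)) -pnat_exponent.
apply: pnat_dvd (pnat_id q_pr); apply/exponentP => _ /morphimP[x nNx xG ->].
by rewrite -morphX //= coset_id // expqN.
Qed.

Section DihedralOrbits.
Variables (p n : nat) (I : finType) (H : {group {perm 'I_n}}).
Variables (Omega : I -> {set 'I_n}) (G : I -> {group {perm 'I_n}}).
Hypotheses (p_pr : prime p) (p_odd : odd p) (Omega_inj : injective Omega).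
Hypothesis orbitsE : [set orbit 'P H x | x : 'I_n] = [set Omega i | i : I].
Hypothesis card_Omega : forall i, #|Omega i| = p.
Hypothesis Omega_dihedral : forall i, perm_iso_dihedral p (Omega i) (restrG (Omega i) H).
Hypothesis G_Sylow : forall i, G i \in 'Syl_p(restrG (Omega i) H).

Implicit Types P Q : {group {perm 'I_n}}.

Local Notation D i := (restrG (Omega i) H).
Local Notation Gprod := <<\bigcup_i G i>>.

Let p_gt2 : 2 < p.
Proof. by move: (prime_gt1 p_pr) p_odd; case: p => [|[|[]]]. Qed.

Let G_pHall i : p.-Sylow(D i) (G i).
Proof. by have := G_Sylow i; rewrite inE. Qed.

Lemma orbit_Omega i x : x \in Omega i -> orbit 'P H x = Omega i.
Proof.
have /imsetP[y _ ->] : Omega i \in [set orbit 'P H x | x : 'I_n] by rewrite orbitsE imset_f.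
by move/orbit_eqP.
Qed.

Lemma Omega_cover x : exists i, x \in Omega i.
Proof.
have /imsetP[i _ Oi] : orbit 'P H x \in [set Omega i | i : I] by rewrite -orbitsE imset_f.
by exists i; rewrite -Oi orbit_refl.
Qed.

Lemma Omega_disjoint i j x : x \in Omega i -> x \in Omega j -> i = j.
Proof. by move=> xi xj; apply: Omega_inj; rewrite -(orbit_Omega xi) -(orbit_Omega xj). Qed.

Lemma astabs_Omega i : H \subset 'N(Omega i | 'P).
Proof.
have [x xi] : exists x, x \in Omega i by apply/set0Pn; rewrite -card_gt0 card_Omega prime_gt0.
by rewrite -(orbit_Omega xi) acts_orbit ?subsetT.
Qed.

Lemma card_D i : #|D i| = (2 * p)%N.
Proof.
apply: (card_perm_iso_dihedral p_gt2 (Omega_dihedral i)) => x xi.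
by rewrite orbit_restr_perm ?astabs_Omega // (orbit_Omega xi).
Qed.

Lemma card_stab_D i x : x \in Omega i -> #|'C_(D i)[x | 'P]| = 2.
Proof.
move=> xi; have := card_orbit_stab 'P (D i) x.
rewrite orbit_restr_perm ?astabs_Omega // (orbit_Omega xi) card_Omega card_D [RHS]mulnC.
by move/eqP; rewrite eqn_pmul2l ?prime_gt0 // => /eqP.
Qed.

Lemma card_G i : #|G i| = p.
Proof.
rewrite (card_Hall (G_pHall i)) card_D partnM ?prime_gt0 // (part_pnat_id (pnat_id p_pr)).
by rewrite part_p'nat ?mul1n // pnatE // inE /= neq_ltn p_gt2.
Qed.

Lemma index_G i : #|D i : G i| = 2.
Proof. by rewrite -divgS ?(pHall_sub (G_pHall i)) // card_D card_G mulnK ?prime_gt0. Qed.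

Lemma G_normal i : G i <| D i.
Proof. exact: index2_normal (pHall_sub (G_pHall i)) (index_G i). Qed.

Lemma Gprod_sub_morphpre i : Gprod \subset restr_perm (Omega i) @*^-1 G i.
Proof.
rewrite gen_subG; apply/bigcupsP => j _; apply/subsetP => g gGj.
have /morphimP[h _ _ def_g] := subsetP (pHall_sub (G_pHall j)) g gGj.
have g_on : perm_on (Omega j) g by rewrite def_g restr_perm_on.
have [-> | neq_ij] := eqVneq i j.
  by rewrite mem_morphpre ?perm_on_astabs //= restr_perm_on_id.
apply: (subsetP (ker_sub_pre _ _)); rewrite ker_restr_perm (perm_on_astab g_on) //.
apply/pred0P => x /=; apply/negbTE/andP => -[xi xj].
by rewrite (Omega_disjoint xi xj) eqxx in neq_ij.
Qed.

Lemma mem_Gprod x : x \in H -> (x \in Gprod) = [forall i, restr_perm (Omega i) x \in G i].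
Proof.
move=> xH; apply/idP/forallP => [xG i | xG].
  by have /morphpreP[] := subsetP (Gprod_sub_morphpre i) x xG.
have nOmega_x i := subsetP (astabs_Omega i) x xH.
rewrite -(prod_restr_perm Omega_disjoint Omega_cover nOmega_x).
by apply: group_prod => i _; apply: subsetP (sub_gen (bigcup_sup i isT)) _ (xG i).
Qed.

Lemma pgroup_HGprod : p.-group (H :&: Gprod).
Proof.
rewrite -pnat_exponent; apply: pnat_dvd (pnat_id p_pr); apply/exponentP => x /setIP[xH].
rewrite mem_Gprod // => /forallP xG; apply/permP => y; rewrite perm1.
have [i yi] := Omega_cover y; have nx := subsetP (astabs_Omega i) x xH.
rewrite -(restr_permE (groupX p nx) yi) morphX // -(card_G i) expg_cardG ?xG //.
exact: perm1.
Qed.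

Lemma p_elt_HGprod x : x \in H -> p.-elt x -> x \in H :&: Gprod.
Proof.
move=> xH px; rewrite inE xH mem_Gprod //; apply/forallP => i.
have nx := subsetP (astabs_Omega i) x xH.
by rewrite (mem_normal_Hall (G_pHall i) (G_normal i)) ?mem_morphim ?morph_p_elt.
Qed.

Lemma Sylow_HGprod P : p.-Sylow(H) P -> P :=: H :&: Gprod.
Proof.
move=> sylP; apply/esym/(sub_pHall sylP pgroup_HGprod _ (subsetIl _ _)).
apply/subsetP => x xP; apply: p_elt_HGprod; first exact: subsetP (pHall_sub sylP) x xP.
exact: mem_p_elt (pHall_pgroup sylP) xP.
Qed.

Lemma norm_Sylow P : p.-Sylow(H) P -> 'N(H) \subset 'N(P).
Proof.
move=> sylP; apply/subsetP => g nHg; apply/normP.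
have sylPg : p.-Sylow(H) (P :^ g)%G by rewrite pHallJnorm.
by rewrite (Sylow_HGprod sylPg) (Sylow_HGprod sylP).
Qed.

Lemma Sylow_normal P : p.-Sylow(H) P -> P <| H.
Proof.
by move=> sylP; rewrite /normal (pHall_sub sylP) (subset_trans (normG H)) ?norm_Sylow.
Qed.

Lemma expg2_HGprod x : x \in H -> x ^+ 2 \in H :&: Gprod.
Proof.
move=> xH; rewrite inE groupX // mem_Gprod ?groupX //; apply/forallP => i.
have nx := subsetP (astabs_Omega i) x xH.
by rewrite morphX // (expg2_index2 (pHall_sub (G_pHall i)) (index_G i)) ?mem_morphim.
Qed.

Lemma sdprod_Sylow P Q : p.-Sylow(H) P -> 2.-Sylow(H) Q -> P ><| Q = H.
Proof.
move=> sylP sylQ; have nPH := Sylow_normal sylP.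
apply/(sdprod_normal_pHallP nPH sylQ); apply/and3P; split; first exact: pHall_sub sylP.
  by apply: pi_pgroup (pHall_pgroup sylP) _; rewrite inE /= neq_ltn p_gt2 orbT.
rewrite pnatNK; apply: pnat_index_expg => // x xH.
by rewrite (Sylow_HGprod sylP) expg2_HGprod.
Qed.

Lemma restr_Sylow P i : p.-Sylow(H) P -> restrG (Omega i) P = G i.
Proof.
move=> sylP; have nP := subset_trans (pHall_sub sylP) (astabs_Omega i).
have sylPi : p.-Sylow(D i) (restrG (Omega i) P) by apply: morphim_pHall.
apply/eqP; rewrite eqEcard (sub_normal_Hall (G_pHall i) (G_normal i) (pHall_sub sylPi)).
by rewrite (pHall_pgroup sylPi) (card_Hall sylPi) (card_Hall (G_pHall i)) /=.
Qed.

Lemma orbit_Sylow P i x : p.-Sylow(H) P -> x \in Omega i -> orbit 'P P x = Omega i.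
Proof.
move=> sylP xi; have nP := subset_trans (pHall_sub sylP) (astabs_Omega i).
have C_Gx : 'C_(G i)[x | 'P] = 1.
  rewrite -(setIidPl (pHall_sub (G_pHall i))) -setIA coprime_TIg //.
  by rewrite card_G card_stab_D // coprimen2.
apply/eqP; rewrite eqEcard -{1}(orbit_Omega xi) imsetS ?(pHall_sub sylP) //=.
by rewrite -(orbit_restr_perm nP xi) restr_Sylow // card_orbit C_Gx indexg1 card_G card_Omega.
Qed.

Lemma restr_Sylow2_stab Q i : 2.-Sylow(H) Q ->
  exists2 a, a \in Omega i & restrG (Omega i) Q = 'C_(D i)[a | 'P].
Proof.
move=> sylQ; have nQ := subset_trans (pHall_sub sylQ) (astabs_Omega i).
have sylQi : 2.-Sylow(D i) (restrG (Omega i) Q) by apply: morphim_pHall.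
have Qi_acts : [acts restrG (Omega i) Q, on Omega i | 'P].
  by apply/subsetP => _ /morphimP[g _ _ ->]; apply/perm_on_astabs/restr_perm_on.
have [a /setIP[ai /afixP fix_a]] : exists a, a \in 'Fix_(Omega i | 'P)(restrG (Omega i) Q).
  apply/set0Pn; apply: contraTneq p_odd => Fix0.
  have := pgroup_fix_mod (pHall_pgroup sylQi) Qi_acts.
  by rewrite card_Omega Fix0 cards0 mod0n modn2 => /eqP; rewrite eqb0.
exists a => //; apply/esym/(sub_pHall sylQi); last exact: subsetIl.
  by rewrite /pgroup card_stab_D // pnat_id.
by rewrite subsetI (pHall_sub sylQi); apply/subsetP => g gQi; apply/astab1P; apply: fix_a.
Qed.

Lemma dihedral_orbits_Sylow_structure P Q : p.-Sylow(H) P -> 2.-Sylow(H) Q ->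
  [/\ P ><| Q = H, (H :&: Gprod) ><| Q = H & 'N(H) \subset 'N(P)]
  /\ [/\ P \subset Gprod, (forall i, restrG (Omega i) P = G i),
         (forall i x, x \in Omega i -> orbit 'P P x = Omega i) &
         (forall i, cyclic (restrG (Omega i) P) /\ #|restrG (Omega i) P| = p)]
  /\ (forall i, exists2 a, a \in Omega i & restrG (Omega i) Q = 'C_(D i)[a | 'P]).
Proof.
move=> sylP sylQ; have PE := Sylow_HGprod sylP.
split; [split | split; [split | ]].
- exact: sdprod_Sylow.
- by rewrite -PE; apply: sdprod_Sylow.
- exact: norm_Sylow.
- by rewrite PE subsetIr.
- by move=> i; apply: restr_Sylow.
- by move=> i x; apply: orbit_Sylow.
- by move=> i; rewrite restr_Sylow // prime_cyclic card_G.
- by move=> i; apply: restr_Sylow2_stab.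
Qed.

End DihedralOrbits.

Theorem lemma7p1 (p k n : nat) (H : {group {perm 'I_n}})
  (Omega : 'I_k -> {set 'I_n}) (G : 'I_k -> {group {perm 'I_n}})
  (Hp H2 : {group {perm 'I_n}}) :
  prime p -> odd p -> n = (p * k)%N ->
  injective Omega ->
  [set orbit 'P H x | x : 'I_n] = [set Omega i | i : 'I_k] ->
  (forall i, #|Omega i| = p) ->
  (forall i, perm_iso_dihedral p (Omega i) (restrG (Omega i) H)) ->
  (forall i, G i \in 'Syl_p(restrG (Omega i) H)) ->
  Hp \in 'Syl_p(H) -> H2 \in 'Syl_2(H) ->
  let Gprod := <<\bigcup_(i < k) G i>> in
  (* (1) *)
  [/\ Hp ><| H2 = H, (H :&: Gprod) ><| H2 = H & 'N(H) \subset 'N(Hp)]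
  (* (2) *)
  /\ [/\ Hp \subset Gprod, (forall i, restrG (Omega i) Hp = G i),
         (forall i x, x \in Omega i -> orbit 'P Hp x = Omega i) &
         (forall i, cyclic (restrG (Omega i) Hp) /\ #|restrG (Omega i) Hp| = p)]
  (* (3) *)
  /\ (forall i, exists2 a, a \in Omega i &
        restrG (Omega i) H2 = 'C_(restrG (Omega i) H)[a | 'P]).
Proof.
move=> p_pr p_odd _ Omega_inj orbitsE card_Omega Omega_dih G_Syl.
rewrite !inE; exact: dihedral_orbits_Sylow_structure.
Qed.
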